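(* Let $\forall\overline p\,\Gamma/^2\phi$ be a $\Pi_2$-rule with $\overline p=p_1,\dots,p_n$ and let $C=\{p_1,\dots,p_n\}$. Then $\forall\overline p\,\Gamma/^2\phi$ is admissible over $\vdash_S$ if and only if for every $C$-invariant substitution $\sigma$, $\vdash_S\sigma(\Gamma)$ implies $\vdash_S\sigma(\phi)$.
   Context: $\vdash$ is a finitary structural logic over a signature $\mathcal L$, and $\vdash_S$ a Hilbert-style system for it. A $\Pi_2$-rule $\forall\overline p\,\Gamma/^2\phi$ consists of a finite set of formulas $\Gamma=\{\phi_i(\overline p,\overline q)\}$ and a formula $\phi(\overline q)$ not containing the variables $\overline p$. For a set $\Sigma$ of $\Pi_2$-rules, $\vdash_{S\oplus\Sigma}\psi$ means there is a sequence $\psi_0,\dots,\psi_m=\psi$ where each $\psi_i$ is an axiom instance of $\vdash_S$, or follows from earlier members by a rule of $\vdash_S$, or $\psi_i=\chi(\overline\xi/\overline q)$ where $\forall\overline p\{\mu_0,\dots,\mu_k\}/^2\chi(\overline q)\in\Sigma$ and each $\mu_j(\overline r/\overline p,\overline\xi/\overline q)$ occurs earlier, with $\overline r$ fresh variables not occurring in $\overline\xi$. A $\Pi_2$-rule $\rho$ is admissible over $\vdash_S$ if for all $\psi$, $\vdash_{S\oplus\{\rho\}}\psi$ implies $\vdash_S\psi$. For a finite set $C$ of variables, a substitution $\sigma$ is $C$-invariant if $\sigma(p)=p$ for $p\in C$ and, for every variable $q\notin C$, $\sigma(q)$ contains no variable from $C$. *)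

From Stdlib Require Import List Arith Fin.
Import ListNotations.
Set Implicit Arguments.

Section Syntax.
Variable Op : Type.
Variable ar : Op -> nat.

Inductive form : Type :=
| Var : nat -> form
| App : forall o : Op, (Fin.t (ar o) -> form) -> form.

Fixpoint subst (s : nat -> form) (f : form) : form :=
  match f with
  | Var n => s n
  | @App o args => @App o (fun k => subst s (args k))
  end.

Inductive occurs (v : nat) : form -> Prop :=
| occ_var : occurs v (Var v)
| occ_app : forall o (args : Fin.t (ar o) -> form) k,
    occurs v (args k) -> occurs v (@App o args).

(* A Hilbert-style system: a set of axioms and a set of finitary rules
   (premises, conclusion); instances are obtained by substitution. *)
Record hilbert := Hilbert {
  axioms : form -> Prop;
  rules : list form -> form -> Prop }.

(* The sequence-style notion of derivation: [J earlier psi] says that psi is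
   justified given the list [earlier] of previous members. *)
Definition derivation (J : list form -> form -> Prop) (l : list form) : Prop :=
  forall i psi, nth_error l i = Some psi -> J (firstn i l) psi.

Definition derivable (J : list form -> form -> Prop) (psi : form) : Prop :=
  exists l, derivation J (l ++ [psi]).

Definition step_S (S : hilbert) (earlier : list form) (psi : form) : Prop :=
  (exists (a : form) (s : nat -> form), axioms S a /\ psi = subst s a)
  \/ (exists (prems : list form) (c : form) (s : nat -> form),
        rules S prems c /\ psi = subst s c /\
        (forall mu, In mu prems -> In (subst s mu) earlier)).

Definition provable (S : hilbert) (psi : form) : Prop := derivable (step_S S) psi.

Record pi2rule := Pi2 {
  pvars : list nat;
  prem : list form;
  concl : form;
  pvars_uniq : NoDup pvars;
  concl_no_p : forall p, In p pvars -> ~ occurs p concl }.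

Definition inb (v : nat) (l : list nat) : bool := existsb (Nat.eqb v) l.

Definition qvar (rho : pi2rule) (q : nat) : Prop :=
  ~ In q (pvars rho) /\
  (occurs q (concl rho) \/ exists mu, In mu (prem rho) /\ occurs q mu).

(* Application of the Pi_2-rule rho: psi = phi(xibar/qbar), and each
   mu(rbar/pbar, xibar/qbar) (mu in Gamma) occurs earlier, where rbar are
   distinct fresh variables not occurring in xibar. The renaming p_i |-> r_i
   is [r], the substitution q |-> xi_q is [xi]. *)
Definition step_rule (rho : pi2rule) (earlier : list form) (psi : form) : Prop :=
  exists (r : nat -> nat) (xi : nat -> form),
    (forall p p', In p (pvars rho) -> In p' (pvars rho) -> r p = r p' -> p = p') /\
    (forall p q, In p (pvars rho) -> qvar rho q -> ~ occurs (r p) (xi q)) /\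
    psi = subst xi (concl rho) /\
    (forall mu, In mu (prem rho) ->
       In (subst (fun v => if inb v (pvars rho) then Var (r v) else xi v) mu)
          earlier).

Definition step_S_rule (S : hilbert) (rho : pi2rule)
    (earlier : list form) (psi : form) : Prop :=
  step_S S earlier psi \/ step_rule rho earlier psi.

Definition provable_with (S : hilbert) (rho : pi2rule) (psi : form) : Prop :=
  derivable (step_S_rule S rho) psi.

Definition admissible (S : hilbert) (rho : pi2rule) : Prop :=
  forall psi, provable_with S rho psi -> provable S psi.

Definition C_invariant (C : list nat) (s : nat -> form) : Prop :=
  (forall p, In p C -> s p = Var p) /\
  (forall q, ~ In q C -> forall p, In p C -> ~ occurs p (s q)).

End Syntax.

(** An application of the Pi_2-rule instantiates the p's by fresh variables
    r p and the q's by formulas xi q.  From such an application one builds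
    the C-invariant substitution sigma that fixes C and sends q to xi q with
    every variable of C renamed to a fresh one.  Renaming r p back to p turns
    the available premises into sigma(Gamma); undoing the renaming of C turns
    sigma(phi) back into the conclusion xi(phi).  Since |-_S is closed under
    substitution, induction along a derivation in S (+) rho then shows that
    each of its members is provable in S. *)

From Stdlib Require Import List Arith Lia FunctionalExtensionality.
Import ListNotations.

Section Substitution.
Context {Op : Type} {ar : Op -> nat}.
Notation F := (form ar).
Notation var := (Var ar).

Lemma subst_comp (t s : nat -> F) (f : F) :
  subst t (subst s f) = subst (fun v => subst t (s v)) f.
Proof.
  induction f as [n|o args IH]; simpl; auto.
  f_equal; apply functional_extensionality; auto.
Qed.

Lemma subst_var (f : F) : subst var f = f.
Proof.
  induction f as [n|o args IH]; simpl; auto.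
  f_equal; apply functional_extensionality; auto.
Qed.

Lemma occurs_inv (v : nat) (f : F) : occurs v f ->
  match f with Var _ n => v = n | App _ args => exists k, occurs v (args k) end.
Proof. intros H; destruct H; eauto. Qed.

Lemma subst_ext_occurs (s s' : nat -> F) (f : F) :
  (forall v, occurs v f -> s v = s' v) -> subst s f = subst s' f.
Proof.
  induction f as [n|o args IH]; simpl; intros H.
  - apply H; constructor.
  - f_equal; apply functional_extensionality; intro k; apply IH.
    intros v Hv; apply H; econstructor; eauto.
Qed.

Lemma occurs_subst (s : nat -> F) (f : F) (w : nat) :
  occurs w (subst s f) <-> exists v, occurs v f /\ occurs w (s v).
Proof.
  split.
  - induction f as [n|o args IH]; simpl; intros H.
    + exists n; split; auto; constructor.
    + apply occurs_inv in H; destruct H as [k Hk].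
      destruct (IH k Hk) as [v [Hv Hw]]; exists v; split; auto; econstructor; eauto.
  - intros [v [Hv Hw]]; induction Hv; simpl; auto; econstructor; eauto.
Qed.

Fixpoint fin_max (n : nat) : (Fin.t n -> nat) -> nat :=
  match n with
  | 0 => fun _ => 0
  | S n => fun g => Nat.max (g Fin.F1) (fin_max n (fun k => g (Fin.FS k)))
  end.
Arguments fin_max {n}.

Lemma le_fin_max {n : nat} (g : Fin.t n -> nat) (k : Fin.t n) : g k <= fin_max g.
Proof.
  induction k as [n|n k IH]; simpl; [lia|].
  specialize (IH (fun k => g (Fin.FS k))); simpl in IH; lia.
Qed.

Fixpoint max_var (f : F) : nat :=
  match f with
  | Var _ n => n
  | App _ args => fin_max (fun k => max_var (args k))
  end.

Lemma occurs_le_max_var (v : nat) (f : F) : occurs v f -> v <= max_var f.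
Proof.
  induction 1 as [|o args k _ IH]; simpl; auto.
  eapply Nat.le_trans; [exact IH|].
  apply (le_fin_max (fun k => max_var (args k))).
Qed.

End Substitution.

Section Derivations.
Context {Op : Type} {ar : Op -> nat}.
Notation F := (form ar).
Implicit Types (J : list F -> F -> Prop) (l E : list F).

Definition monotone_step J : Prop :=
  forall E E' psi, incl E E' -> J E psi -> J E' psi.

Lemma derivation_nil J : derivation J [].
Proof. intros [|i] psi H; discriminate. Qed.

Lemma derivation_rcons J l psi :
  derivation J (l ++ [psi]) <-> derivation J l /\ J l psi.
Proof.
  unfold derivation.
  assert (Hprefix : forall i, i <= length l -> firstn i (l ++ [psi]) = firstn i l).
  { intros i Hi; rewrite firstn_app, (proj2 (Nat.sub_0_le i _) Hi), app_nil_r; auto. }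
  split.
  - intros H; split.
    + intros i x Hi.
      assert (Hlt : i < length l) by (apply nth_error_Some; congruence).
      rewrite <- Hprefix by lia; apply H; rewrite nth_error_app1; auto.
    + rewrite <- (firstn_all l), <- Hprefix by lia.
      apply H; rewrite nth_error_app2, Nat.sub_diag by lia; auto.
  - intros [Hl Hpsi] i x Hi.
    destruct (Nat.lt_ge_cases i (length l)) as [Hlt|Hge].
    + rewrite nth_error_app1 in Hi by lia.
      rewrite Hprefix by lia; auto.
    + rewrite nth_error_app2 in Hi by lia.
      destruct (i - length l) as [|k] eqn:Hk; [|destruct k; discriminate].
      injection Hi as <-.
      replace i with (length l) by lia.
      rewrite Hprefix, firstn_all by lia; auto.
Qed.

Lemma derivation_app J l1 l2 : monotone_step J ->
  derivation J l1 -> derivation J l2 -> derivation J (l1 ++ l2).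
Proof.
  intros HJ H1; induction l2 as [|x l2 IH] using rev_ind.
  - rewrite app_nil_r; auto.
  - rewrite app_assoc, !derivation_rcons; intros [H2 Hx]; split; auto.
    eapply HJ; [|exact Hx]; intros y Hy; apply in_or_app; auto.
Qed.

Lemma derivation_sound (P : F -> Prop) J l :
  (forall E psi, (forall x, In x E -> P x) -> J E psi -> P psi) ->
  derivation J l -> forall x, In x l -> P x.
Proof.
  intros HP; induction l as [|y l IH] using rev_ind; [contradiction|].
  rewrite derivation_rcons; intros [Hl Hy] x Hx.
  apply in_app_or in Hx as [Hx|[<-|[]]]; eauto.
Qed.

Lemma derivation_map (f : F -> F) J l :
  (forall E psi, J E psi -> J (map f E) (f psi)) ->
  derivation J l -> derivation J (map f l).
Proof.
  intros Hf; induction l as [|x l IH] using rev_ind; [intros; apply derivation_nil|].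
  rewrite map_app; simpl; rewrite !derivation_rcons; intros [Hl Hx]; split; auto.
Qed.

Lemma derivable_mono J J' psi :
  (forall E x, J E x -> J' E x) -> derivable J psi -> derivable J' psi.
Proof. intros HJ [l Hl]; exists l; intros i x Hi; auto. Qed.

Lemma derivable_all J E : monotone_step J ->
  (forall x, In x E -> derivable J x) -> exists D, derivation J D /\ incl E D.
Proof.
  intros HJ; induction E as [|a E IH]; intros H.
  - exists []; split; [apply derivation_nil | intros x []].
  - destruct IH as [D [HD HE]]; [intros; apply H; simpl; auto|].
    destruct (H a (or_introl eq_refl)) as [l Hl].
    exists (D ++ (l ++ [a])); split; [apply derivation_app; auto|].
    intros x [<-|Hx]; apply in_or_app; [right; apply in_or_app; simpl; auto|auto].
Qed.

Lemma derivable_step J E psi : monotone_step J ->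
  (forall x, In x E -> derivable J x) -> J E psi -> derivable J psi.
Proof.
  intros HJ HE Hpsi; destruct (derivable_all J E HJ HE) as [D [HD Hincl]].
  exists D; apply derivation_rcons; split; eauto.
Qed.

End Derivations.

Section Hilbert.
Context {Op : Type} {ar : Op -> nat}.
Notation F := (form ar).
Variable S : hilbert ar.

Lemma step_S_monotone : monotone_step (step_S S).
Proof.
  intros E E' psi Hincl [Hax|[prems [c [s [Hr [Hpsi Hprems]]]]]]; [left; auto|].
  right; exists prems, c, s; repeat split; auto.
Qed.

Lemma step_S_rule_monotone rho : monotone_step (step_S_rule S rho).
Proof.
  intros E E' psi Hincl [HS|[r [xi [Hr [Hxi [Hpsi Hprem]]]]]].
  - left; eapply step_S_monotone; eauto.
  - right; exists r, xi; repeat split; auto.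
Qed.

Lemma step_S_subst (t : nat -> F) E psi :
  step_S S E psi -> step_S S (map (subst t) E) (subst t psi).
Proof.
  intros [[a [s [Ha ->]]]|[prems [c [s [Hr [-> Hprems]]]]]].
  - left; exists a, (fun v => subst t (s v)); split; auto; apply subst_comp.
  - right; exists prems, c, (fun v => subst t (s v)); repeat split; auto.
    + apply subst_comp.
    + intros mu Hmu; rewrite <- subst_comp; apply in_map; auto.
Qed.

Lemma provable_subst (t : nat -> F) (f : F) : provable S f -> provable S (subst t f).
Proof.
  intros [l Hl]; exists (map (subst t) l).
  change [subst t f] with (map (subst t) [f]); rewrite <- map_app.
  apply derivation_map; auto using step_S_subst.
Qed.

End Hilbert.

Lemma inb_In (v : nat) (l : list nat) : inb v l = true <-> In v l.
Proof.
  unfold inb; rewrite existsb_exists; split.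
  - intros [x [Hx Hvx]]; apply Nat.eqb_eq in Hvx; subst; auto.
  - intros Hv; exists v; split; auto; apply Nat.eqb_refl.
Qed.

Lemma inb_false (v : nat) (l : list nat) : inb v l = false <-> ~ In v l.
Proof.
  rewrite <- inb_In; destruct (inb v l); split; auto; congruence.
Qed.

Lemma in_le_list_max (p : nat) (l : list nat) : In p l -> p <= list_max l.
Proof.
  intros Hp; pose proof (proj1 (list_max_le l (list_max l)) (le_n _)) as H.
  rewrite Forall_forall in H; auto.
Qed.

Lemma injective_on_left_inverse (r : nat -> nat) (C : list nat) :
  (forall p p', In p C -> In p' C -> r p = r p' -> p = p') ->
  exists inv, forall p, In p C -> inv (r p) = p.
Proof.
  intros Hinj.
  exists (fun v => match find (fun p => r p =? v) C with Some p => p | None => v end).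
  intros p Hp; destruct (find (fun p' => r p' =? r p) C) eqn:Hfind.
  - apply find_some in Hfind as [Hn Heq]; apply Nat.eqb_eq in Heq; auto.
  - eapply find_none in Hfind; [|exact Hp]; rewrite Nat.eqb_refl in Hfind; discriminate.
Qed.

Definition shift_out (C : list nat) (N v : nat) : nat := if inb v C then N + v else v.

Definition shift_back (N v : nat) : nat := if N <=? v then v - N else v.

Lemma shift_out_K (C : list nat) (N v : nat) :
  (forall p, In p C -> p < N) -> v < N -> shift_back N (shift_out C N v) = v.
Proof.
  intros HC Hv; unfold shift_out, shift_back.
  destruct (inb v C); destruct (N <=? _) eqn:Hle;
    [apply Nat.leb_le in Hle | apply Nat.leb_gt in Hle | apply Nat.leb_le in Hle | ]; lia.
Qed.

Section Pi2Rule.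
Context {Op : Type} {ar : Op -> nat}.
Notation F := (form ar).
Notation var := (Var ar).
Variable rho : pi2rule ar.
Notation C := (pvars rho).

Definition freshen (N : nat) (xi : nat -> F) (v : nat) : F :=
  if inb v C then var v else subst (fun w => var (shift_out C N w)) (xi v).

Lemma freshen_C_invariant (N : nat) (xi : nat -> F) :
  (forall p, In p C -> p < N) -> C_invariant C (freshen N xi).
Proof.
  intros HN; split.
  - intros p Hp; unfold freshen; apply inb_In in Hp; rewrite Hp; auto.
  - intros q Hq p Hp Hocc; unfold freshen in Hocc.
    apply inb_false in Hq; rewrite Hq in Hocc.
    apply occurs_subst in Hocc as [w [_ Hw]]; apply occurs_inv in Hw.
    unfold shift_out in Hw; destruct (inb w C) eqn:Hw'.
    + specialize (HN p Hp); lia.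
    + subst w; apply inb_false in Hw'; contradiction.
Qed.

Lemma freshen_premises (r : nat -> nat) (xi : nat -> F) (N : nat) :
  (forall p p', In p C -> In p' C -> r p = r p' -> p = p') ->
  (forall p q, In p C -> qvar rho q -> ~ occurs (r p) (xi q)) ->
  exists th : nat -> F, forall mu, In mu (prem rho) ->
    subst th (subst (fun v => if inb v C then var (r v) else xi v) mu)
    = subst (freshen N xi) mu.
Proof.
  intros Hinj Hfresh.
  destruct (injective_on_left_inverse r C Hinj) as [inv Hinv].
  exists (fun v => if inb v (map r C) then var (inv v) else var (shift_out C N v)).
  intros mu Hmu; rewrite subst_comp; apply subst_ext_occurs; intros v Hv.
  unfold freshen; destruct (inb v C) eqn:HvC; simpl.
  - apply inb_In in HvC.
    replace (inb (r v) (map r C)) with true by (symmetry; apply inb_In, in_map; auto).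
    rewrite Hinv; auto.
  - apply subst_ext_occurs; intros w Hw.
    destruct (inb w (map r C)) eqn:HwC; auto.
    apply inb_In, in_map_iff in HwC as [p [<- Hp]].
    exfalso; apply (Hfresh p v Hp); auto.
    split; [apply inb_false; auto | right; eauto].
Qed.

Lemma freshen_concl (xi : nat -> F) (N : nat) :
  (forall p, In p C -> p < N) -> max_var (subst xi (concl rho)) < N ->
  subst (fun w => var (shift_back N w)) (subst (freshen N xi) (concl rho))
  = subst xi (concl rho).
Proof.
  intros HC Hconcl; rewrite subst_comp; apply subst_ext_occurs; intros v Hv.
  unfold freshen; destruct (inb v C) eqn:HvC.
  { apply inb_In in HvC; exfalso; eapply concl_no_p; eauto. }
  rewrite subst_comp, <- subst_var; apply subst_ext_occurs; intros w Hw; simpl.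
  rewrite shift_out_K; auto.
  eapply Nat.le_lt_trans; [|exact Hconcl].
  apply occurs_le_max_var, occurs_subst; eauto.
Qed.

Lemma step_rule_C_invariant (s : nat -> F) :
  C_invariant C s -> step_rule rho (map (subst s) (prem rho)) (subst s (concl rho)).
Proof.
  intros [HsC Hsq]; exists (fun v => v), s; repeat split; auto.
  - intros p q Hp [Hq _]; apply Hsq; auto.
  - intros mu Hmu; replace (subst _ mu) with (subst s mu); [apply in_map; auto|].
    apply subst_ext_occurs; intros v _.
    destruct (inb v C) eqn:HvC; auto.
    apply inb_In in HvC; auto.
Qed.

Lemma step_rule_sound (S : hilbert ar) E psi :
  (forall s, C_invariant C s ->
     (forall g, In g (prem rho) -> provable S (subst s g)) ->
     provable S (subst s (concl rho))) ->
  (forall x, In x E -> provable S x) -> step_rule rho E psi -> provable S psi.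
Proof.
  intros Hyp HE [r [xi [Hinj [Hfresh [-> Hprem]]]]].
  set (N := 1 + list_max C + max_var (subst xi (concl rho))).
  assert (HCN : forall p, In p C -> p < N).
  { intros p Hp; apply in_le_list_max in Hp; unfold N; lia. }
  destruct (freshen_premises r xi N Hinj Hfresh) as [th Hth].
  rewrite <- (freshen_concl xi N HCN) by (unfold N; lia).
  apply provable_subst, Hyp; [apply freshen_C_invariant; auto|].
  intros g Hg; rewrite <- Hth by auto; apply provable_subst, HE, Hprem; auto.
Qed.

End Pi2Rule.

Theorem mainTheorem2 (Op : Type) (ar : Op -> nat) (S : hilbert ar)
    (rho : pi2rule ar) :
  admissible S rho <->
  (forall s : nat -> form ar, C_invariant (pvars rho) s ->
     (forall g, In g (prem rho) -> provable S (subst s g)) ->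
     provable S (subst s (concl rho))).
Proof.
  split.
  - intros Hadm s Hs Hprem; apply Hadm.
    apply (derivable_step _ (map (subst s) (prem rho))).
    + apply step_S_rule_monotone.
    + intros x Hx; apply in_map_iff in Hx as [g [<- Hg]].
      eapply derivable_mono; [intros E x Hstep; left; exact Hstep | apply Hprem, Hg].
    + right; apply step_rule_C_invariant; auto.
  - intros Hyp psi [l Hl].
    apply (derivation_sound (provable S) (step_S_rule S rho) (l ++ [psi]));
      auto using in_or_app, in_eq.
    intros E x HE [Hstep|Hstep].
    + eapply derivable_step; eauto using step_S_monotone.
    + eapply step_rule_sound; eauto.
Qed.
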